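(* Let $n\ge2$ and let $\widehat T\subset\mathbb R^n$ be a Kuhn simplex. Then (i) $\operatorname{diam}(\widehat T)=R(\widehat T)=\sqrt n$; (ii) $w(\widehat T)=1/\sqrt2$; (iii) $1/r(\widehat T)=1+(n-1)/\sqrt2$; (iv) $\gamma(\widehat T)=\sqrt n\,(1+(n-1)/\sqrt2)$; (v) $2\gamma(\widehat T)\operatorname{diam}(\widehat T)/w(\widehat T)=2n(n+\sqrt2-1)$.
   Context: A Kuhn simplex is $[0,e_{\pi(1)},e_{\pi(1)}+e_{\pi(2)},\dots,e_{\pi(1)}+\dots+e_{\pi(n)}]$ for a permutation $\pi$ of $\{1,\dots,n\}$ and unit vectors $e_i$ of $\mathbb R^n$. For a simplex $S$: $R(S)$ is the diameter of the smallest ball containing $S$, $r(S)$ the diameter of the largest ball contained in $S$, $\gamma(S)=R(S)/r(S)$, and $w(S)=\min_f\sup_{x\in S}\operatorname{dist}(x,f)$ over the $(n-1)$-dimensional faces $f$ of $S$ (minimal height). *)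

From HB Require Import structures.
From mathcomp Require Import all_boot all_order all_algebra all_fingroup.
From mathcomp Require Import classical_sets reals.
Set Implicit Arguments. Unset Strict Implicit. Unset Printing Implicit Defensive.
Import Order.TTheory GRing.Theory Num.Theory.
Local Open Scope ring_scope.
Local Open Scope classical_set_scope.

Section Defs.
Variables (R : realType) (n : nat).

Definition enorm (x : 'rV[R]_n) : R := Num.sqrt (\sum_(i < n) x ord0 i ^+ 2).
Definition edist (x y : 'rV[R]_n) : R := enorm (x - y).

Definition cball (c : 'rV[R]_n) (rho : R) : set 'rV[R]_n :=
  [set y | edist y c <= rho].

Definition simplex (v : 'I_n.+1 -> 'rV[R]_n) : set 'rV[R]_n :=
  [set x | exists lam : 'I_n.+1 -> R,
     (forall i, 0 <= lam i) /\ \sum_i lam i = 1 /\ x = \sum_i lam i *: v i].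

Definition facet (v : 'I_n.+1 -> 'rV[R]_n) (k : 'I_n.+1) : set 'rV[R]_n :=
  [set x | exists lam : 'I_n.+1 -> R,
     (forall i, 0 <= lam i) /\ \sum_i lam i = 1 /\ lam k = 0 /\
     x = \sum_i lam i *: v i].

Definition dist_set (x : 'rV[R]_n) (A : set 'rV[R]_n) : R :=
  inf [set d | exists2 y, A y & d = edist x y].

Definition diam (S : set 'rV[R]_n) : R :=
  sup [set d | exists x y, S x /\ S y /\ d = edist x y].

Definition circum_diam (S : set 'rV[R]_n) : R :=
  inf [set d | exists c rho, 0 <= rho /\ S `<=` cball c rho /\ d = 2 * rho].

Definition in_diam (S : set 'rV[R]_n) : R :=
  sup [set d | exists c rho, 0 <= rho /\ cball c rho `<=` S /\ d = 2 * rho].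

Definition gamma_simplex (v : 'I_n.+1 -> 'rV[R]_n) : R :=
  circum_diam (simplex v) / in_diam (simplex v).

Definition min_height (v : 'I_n.+1 -> 'rV[R]_n) : R :=
  inf [set h | exists k : 'I_n.+1,
         h = sup [set d | exists2 x, simplex v x & d = dist_set x (facet v k)]].

Definition unitv (i : 'I_n) : 'rV[R]_n := delta_mx ord0 i.

Definition kuhn_vertices (pi : 'S_n) (k : 'I_n.+1) : 'rV[R]_n :=
  \sum_(j < n | (j < k)%N) unitv (pi j).

End Defs.

From HB Require Import structures.
From mathcomp Require Import all_boot all_order all_algebra all_fingroup.
From mathcomp Require Import classical_sets reals.
From mathcomp Require Import ring lra.
Set Implicit Arguments. Unset Strict Implicit. Unset Printing Implicit Defensive.
Import Order.TTheory GRing.Theory Num.Theory.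
Local Open Scope ring_scope.
Local Open Scope classical_set_scope.

(* Writing z_j := x_(pi j), the Kuhn simplex is 1 >= z_1 >= ... >= z_n >= 0, so its
   barycentric coordinates are the affine functions lambda_0 = 1 - z_1,
   lambda_k = z_k - z_(k+1) and lambda_n = z_n, whose gradients have squared norm 1 for
   k = 0, n and 2 for 0 < k < n.  Moving from x against the gradient of lambda_k does not
   decrease the other coordinates, so the distance from x to the facet lambda_k = 0 is
   lambda_k(x) / |grad lambda_k|: the heights are 1 and 1/sqrt 2, and a ball of radius r
   around c lies in the simplex iff r |grad lambda_k| <= lambda_k(c) for all k, whence the
   inradius 1 / sum_k |grad lambda_k| = 1 / (2 + (n-1) sqrt 2).  Diameter and circumradius
   come from the cube [0,1]^n, which contains the simplex and whose diagonal joins its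
   vertices 0 and (1,...,1). *)

Lemma sup_max (R : realType) (E : set R) (a : R) : E a -> ubound E a -> sup E = a.
Proof.
move=> Ea ubEa; apply/le_anti/andP; split; first by apply: ge_sup => //; exists a.
by apply: ub_le_sup => //; exists a.
Qed.

Lemma inf_min (R : realType) (E : set R) (a : R) : E a -> lbound E a -> inf E = a.
Proof.
move=> Ea lbEa; apply/le_anti/andP; split; last by apply: lb_le_inf => //; exists a.
by apply: ge_inf => //; exists a.
Qed.

Lemma sqrtr_le (R : rcfType) (a t : R) :
  0 <= t -> (Num.sqrt a <= t) = (a <= t ^+ 2).
Proof. by move=> t0; rewrite -{1}(ger0_norm t0) -sqrtr_sqr ler_sqrt ?sqr_ge0. Qed.

Section EuclideanSpace.
Variables (R : realType) (n : nat).
Implicit Types (d x y : 'rV[R]_n).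

Definition sqnorm d : R := \sum_i d ord0 i ^+ 2.

Lemma sqnormZ (a : R) d : sqnorm (a *: d) = a ^+ 2 * sqnorm d.
Proof. by rewrite /sqnorm mulr_sumr; apply: eq_bigr => i _; rewrite mxE exprMn. Qed.

Lemma sqr_coord_le_sqnorm d p : d ord0 p ^+ 2 <= sqnorm d.
Proof.
rewrite /sqnorm (bigD1 p) //= lerDl.
by apply: sumr_ge0 => i _; rewrite sqr_ge0.
Qed.

Lemma sqr_coord2_le_sqnorm d p q :
  p != q -> d ord0 p ^+ 2 + d ord0 q ^+ 2 <= sqnorm d.
Proof.
move=> pq; rewrite /sqnorm (bigD1 p) // (bigD1 q) 1?eq_sym //= addrA lerDl.
by apply: sumr_ge0 => i _; rewrite sqr_ge0.
Qed.

Lemma edistE x y : edist x y = Num.sqrt (sqnorm (x - y)).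
Proof. by []. Qed.

Lemma edist_le x y (r : R) :
  0 <= r -> (edist x y <= r) = (sqnorm (x - y) <= r ^+ 2).
Proof. exact: sqrtr_le. Qed.

Lemma dist_set_le x (A : set 'rV[R]_n) y : A y -> dist_set x A <= edist x y.
Proof.
move=> Ay; apply: ge_inf; last by exists y.
by exists 0 => _ [z _ ->]; exact: sqrtr_ge0.
Qed.

End EuclideanSpace.

Section KuhnSimplex.
Variables (R : realType) (m : nat) (pi : 'S_m.+1).
Local Notation n := m.+1.
Local Notation v := (@kuhn_vertices R n pi).
Local Notation T := (simplex v).
Implicit Types (c d x y : 'rV[R]_n).

Lemma kuhn_verticesE k i : v k ord0 i = (((pi^-1)%g i < k)%N)%:R.
Proof.
rewrite /kuhn_vertices summxE.
under eq_bigr do rewrite mxE eqxx /= -(canF_eq (permKV pi)) eq_sym.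
case: ltnP => [ik | ki].
  by rewrite (bigD1 ((pi^-1)%g i)) //= eqxx big1 ?addr0 // => j /andP[_ /negbTE ->].
by rewrite big1 // => j jk; rewrite -val_eqE ltn_eqF //; apply: leq_trans jk ki.
Qed.

(* [kuhn_coord j x] is z_j for 1 <= j <= n (pi acts on 0-based indices), extended by
   z_0 = z_(n+1) = 0 so that [kuhn_bary k x = (k == 0) + z_k - z_(k+1)] for all k <= n. *)
Definition kuhn_coord (j : nat) x : R :=
  if (0 < j <= n)%N then x ord0 (pi (inord j.-1)) else 0.

Definition bary_lin (k : nat) x : R := kuhn_coord k x - kuhn_coord k.+1 x.

Lemma kuhn_coordP j (a : R) x y :
  kuhn_coord j (a *: x + y) = a * kuhn_coord j x + kuhn_coord j y.
Proof. by rewrite /kuhn_coord; case: ifP; rewrite ?mxE // mulr0 addr0. Qed.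

Lemma bary_lin_is_linear k : linear_for *%R (bary_lin k).
Proof. by move=> a x y; rewrite /bary_lin !kuhn_coordP opprD addrACA mulrBr. Qed.

HB.instance Definition _ k :=
  GRing.isLinear.Build R 'rV[R]_n R *%R (bary_lin k) (bary_lin_is_linear k).

Definition kuhn_bary (k : nat) x : R := (k == 0)%:R + bary_lin k x.

Lemma kuhn_coord_vertex i j : kuhn_coord j (v i) = ((0 < j <= i)%N)%:R.
Proof.
rewrite /kuhn_coord; case: ifP => [/andP[j0 jn] | ].
  by rewrite kuhn_verticesE permK inordK ?prednK ?j0 // -ltnS prednK.
case: j => [|j] //= /negbT; rewrite -ltnNge => nj.
by rewrite leqNgt (leq_trans (ltn_ord i) nj).
Qed.

Lemma kuhn_bary_vertex i (k : 'I_n.+1) : kuhn_bary k (v i) = (k == i)%:R.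
Proof.
rewrite /kuhn_bary /bary_lin !kuhn_coord_vertex -val_eqE /=.
have [-> | k0] := eqVneq (k : nat) 0%N.
  by case: (i : nat) => [|i'] /=; rewrite sub0r ?oppr0 ?addr0 ?subrr.
rewrite add0r lt0n k0 /=.
by case: (ltngtP k i) => ki; rewrite /= ?subrr ?subr0.
Qed.

Lemma kuhn_bary_lincomb (mu : 'I_n.+1 -> R) (k : 'I_n.+1) :
  \sum_i mu i = 1 -> kuhn_bary k (\sum_i mu i *: v i) = mu k.
Proof.
move=> mu1; have -> : kuhn_bary k (\sum_i mu i *: v i) = \sum_i mu i * (k == i)%:R.
  have e0 : ((k : nat) == 0%N)%:R = \sum_i mu i * ((k : nat) == 0%N)%:R :> R.
    by rewrite -mulr_suml mu1 mul1r.
  rewrite /kuhn_bary linear_sum e0 -big_split /=.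
  by apply: eq_bigr => i _; rewrite linearZ -(kuhn_bary_vertex i k) -mulrDr.
rewrite (bigD1 k) //= eqxx mulr1 big1 ?addr0 // => i /negbTE.
by rewrite eq_sym => ->; rewrite mulr0.
Qed.

Lemma sum_bary_lin_from p x :
  (p <= n.+1)%N -> \sum_(p <= k < n.+1) bary_lin k x = kuhn_coord p x.
Proof.
move=> pn; rewrite (@telescope_sumr_eq _ p n.+1 (fun k => - kuhn_coord k x)) //.
  by rewrite {1}/kuhn_coord ltnn andbF oppr0 sub0r opprK.
by move=> k _; rewrite /bary_lin opprK addrC.
Qed.

Lemma sum_kuhn_bary x : \sum_(k < n.+1) kuhn_bary k x = 1.
Proof.
rewrite big_split /= big_ord_recl big1 // addr0.
by rewrite -(big_mkord xpredT (bary_lin ^~ x)) sum_bary_lin_from // /kuhn_coord addr0.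
Qed.

Lemma kuhn_bary_decomp x : x = \sum_(k < n.+1) kuhn_bary k x *: v k.
Proof.
apply/rowP => i; rewrite summxE; set p := (pi^-1)%g i.
rewrite (eq_bigr (fun k : 'I_n.+1 => if (p < k)%N then bary_lin k x else 0)); last first.
  move=> k _; rewrite mxE kuhn_verticesE -/p /kuhn_bary.
  case: ltnP => [pk | _]; last by rewrite mulr0.
  by rewrite mulr1 gtn_eqF ?add0r // (leq_ltn_trans (leq0n p) pk).
rewrite -big_mkcond.
rewrite -[X in _ = X]/(\sum_(k < n.+1 | xpredT k && (p < k)%N) bary_lin k x).
rewrite -(big_geq_mkord p.+1 n.+1 xpredT (bary_lin ^~ x))
  sum_bary_lin_from; last exact: leqW.
by rewrite /kuhn_coord /= ltn_ord inord_val permKV.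
Qed.

Lemma kuhn_simplexP x : T x <-> forall k : 'I_n.+1, 0 <= kuhn_bary k x.
Proof.
split=> [[mu [mu0 [mu1 ->]]] k | bary0]; first by rewrite kuhn_bary_lincomb.
exists (fun k : 'I_n.+1 => kuhn_bary k x); split=> //.
by split; [exact: sum_kuhn_bary | exact: kuhn_bary_decomp].
Qed.

Lemma kuhn_facetP x (k : 'I_n.+1) : facet v k x <-> T x /\ kuhn_bary k x = 0.
Proof.
split=> [[mu [mu0 [mu1 [muk ->]]]] | [/kuhn_simplexP bary0 baryk]].
  by split; [exists mu | rewrite kuhn_bary_lincomb].
exists (fun k : 'I_n.+1 => kuhn_bary k x); split=> //.
by split; [exact: sum_kuhn_bary | split; [exact: baryk | exact: kuhn_bary_decomp]].
Qed.

Lemma kuhn_vertex_in i : T (v i).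
Proof. by apply/kuhn_simplexP => k; rewrite kuhn_bary_vertex ler0n. Qed.

Lemma kuhn_bary_le1 x (k : 'I_n.+1) : T x -> kuhn_bary k x <= 1.
Proof.
move/kuhn_simplexP=> bary0; rewrite -(sum_kuhn_bary x) (bigD1 k) //= lerDl.
by apply: sumr_ge0 => j _; exact: bary0.
Qed.

Lemma kuhn_coord_in01 x i : T x -> 0 <= x ord0 i <= 1.
Proof.
case=> mu [mu0 [mu1 ->]]; rewrite summxE.
under eq_bigr do rewrite mxE kuhn_verticesE.
apply/andP; split; first by apply: sumr_ge0 => k _; rewrite mulr_ge0.
rewrite -[leRHS]mu1; apply: ler_sum => k _.
by case: ltnP; rewrite ?mulr1 ?mulr0.
Qed.

Lemma kuhn_sqnormB_le x y : T x -> T y -> sqnorm (x - y) <= n%:R.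
Proof.
move=> Tx Ty; have -> : n%:R = \sum_(i < n) 1 :> R by rewrite sumr_const card_ord.
apply: ler_sum => i _; rewrite !mxE.
by move: (kuhn_coord_in01 i Tx) (kuhn_coord_in01 i Ty) => /andP[? ?] /andP[? ?]; nra.
Qed.

Lemma kuhn_diam : diam T = Num.sqrt n%:R.
Proof.
apply: sup_max.
  exists (v ord_max), (v ord0).
  split; first exact: kuhn_vertex_in.
  split; first exact: kuhn_vertex_in.
  rewrite edistE; congr Num.sqrt.
  have -> : n%:R = \sum_(i < n) 1 :> R by rewrite sumr_const card_ord.
  apply: eq_bigr => i _.
  by rewrite !mxE !kuhn_verticesE /= ltn_ord subr0 expr1n.
by move=> _ [x [y [Tx [Ty ->]]]]; rewrite edistE ler_wsqrtr // kuhn_sqnormB_le.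
Qed.

Lemma kuhn_circum_diam : circum_diam T = Num.sqrt n%:R.
Proof.
have n0 : (0 : R) <= n%:R by rewrite ler0n.
apply: inf_min.
  exists (const_mx (1 / 2)), (Num.sqrt n%:R / 2).
  split; first by rewrite divr_ge0 ?sqrtr_ge0.
  split; last by rewrite mulrC divfK ?pnatr_eq0.
  move=> x Tx; rewrite /cball /= edist_le ?divr_ge0 ?sqrtr_ge0 //.
  rewrite expr_div_n sqr_sqrtr //.
  have -> : n%:R / 2 ^+ 2 = \sum_(i < n) (1 / 4 : R).
    by rewrite sumr_const card_ord -mulr_natr; field.
  apply: ler_sum => i _; move: (kuhn_coord_in01 i Tx) => /andP[? ?].
  by rewrite !mxE; nra.
move=> _ [c [r [r0 [sub ->]]]].
have := sub _ (kuhn_vertex_in ord0); have := sub _ (kuhn_vertex_in ord_max).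
rewrite /cball /= !edist_le // => h1 h0.
rewrite sqrtr_le ?mulr_ge0 //.
have : \sum_(i < n) (1 / 2 : R) <= r ^+ 2 + r ^+ 2.
  apply: le_trans (lerD h0 h1); rewrite /sqnorm -big_split; apply: ler_sum => i _.
  rewrite !mxE !kuhn_verticesE /= ltn_ord mulr1n sub0r sqrrN.
  have := sqr_ge0 (c ord0 i - 1 / 2); nra.
by rewrite sumr_const card_ord -mulr_natr; nra.
Qed.

Definition bary_grad_sqnorm (k : nat) : R := ((0 < k)%N)%:R + ((k < n)%N)%:R.

Definition bary_grad (k : nat) : 'rV[R]_n :=
  ((0 < k)%N)%:R *: unitv R (pi (inord k.-1)) - ((k < n)%N)%:R *: unitv R (pi (inord k)).

Lemma bary_grad_sqnorm_ge1 k : 1 <= bary_grad_sqnorm k.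
Proof. by rewrite /bary_grad_sqnorm; case: k => [|k] /=; rewrite ?add0r ?lerDl ?ler0n. Qed.

Lemma bary_grad_sqnorm_le2 k : bary_grad_sqnorm k <= 2.
Proof.
by rewrite /bary_grad_sqnorm; do 2 case: (_ < _)%N; rewrite /= ?ler0n ?add0r ?addr0 ?ler1n.
Qed.

Lemma sqr_bary_lin_le (k : 'I_n.+1) d :
  bary_lin k d ^+ 2 <= bary_grad_sqnorm k * sqnorm d.
Proof.
case: k => [[|k] lt_k_n1]; rewrite /bary_lin /kuhn_coord /bary_grad_sqnorm /=.
  by rewrite sub0r sqrrN add0r mul1r sqr_coord_le_sqnorm.
rewrite ltnS in lt_k_n1; rewrite lt_k_n1; case: ifP => lt_k_n.
  have neq_pi : pi (inord k) != pi (inord k.+1) :> 'I_n.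
    by rewrite (inj_eq perm_inj) -val_eqE /= !inordK // (ltn_eqF (ltnSn k)).
  have := sqr_coord2_le_sqnorm d neq_pi; set a := d ord0 _; set b := d ord0 _.
  by rewrite mulr1n; have := sqr_ge0 (a + b); nra.
by rewrite mulr0n subr0 addr0 mul1r sqr_coord_le_sqnorm.
Qed.

Lemma bary_gradE k i : bary_grad k ord0 i =
  ((0 < k)%N && (i == pi (inord k.-1)))%:R - ((k < n)%N && (i == pi (inord k)))%:R.
Proof. by rewrite /bary_grad /unitv !mxE eqxx /= -!natrM !mulnb. Qed.

Lemma sqnorm_bary_grad k : sqnorm (bary_grad k) <= bary_grad_sqnorm k.
Proof.
have sum_indicator (b : bool) (p : 'I_n) : \sum_(i < n) (b && (i == p))%:R = b%:R :> R.
  rewrite (bigD1 p) //= eqxx andbT big1 ?addr0 // => i /negbTE ->.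
  by rewrite andbF.
rewrite /bary_grad_sqnorm -(sum_indicator _ (pi (inord k.-1))).
rewrite -(sum_indicator _ (pi (inord k))) -big_split /=.
apply: ler_sum => i _; rewrite bary_gradE.
by do 2 case: (_ && _); rewrite /= ?mulr1n ?mulr0n; nra.
Qed.

Lemma kuhn_coord_bary_grad k j : (k <= n)%N ->
  kuhn_coord j (bary_grad k) = ((0 < j <= n)%N)%:R * ((j == k)%:R - (j == k.+1)%:R).
Proof.
move=> kn; rewrite /kuhn_coord; case: ifP => [/andP[j0 jn] | _]; last by rewrite mul0r.
case: j j0 jn => [|j] // _ jn /=.
rewrite mul1r bary_gradE !(inj_eq perm_inj) eqSS.
case: k kn => [|k] kn /=; first by rewrite -val_eqE /= !inordK.
rewrite -val_eqE /= (inordK jn) (inordK kn).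
case: (ltnP k.+1 n) => [lt_k1_n | le_n_k1] /=; first by rewrite -val_eqE /= !inordK.
by rewrite (_ : (j == k.+1) = false) // ltn_eqF // (leq_trans jn le_n_k1).
Qed.

Lemma bary_lin_grad_diag (k : 'I_n.+1) : bary_lin k (bary_grad k) = bary_grad_sqnorm k.
Proof.
have kn : (k <= n)%N by rewrite -ltnS.
rewrite /bary_lin !kuhn_coord_bary_grad // /bary_grad_sqnorm eqxx.
rewrite (gtn_eqF (ltnSn k)) (ltn_eqF (ltnSn k)) eqxx kn andbT /=.
by rewrite subr0 sub0r mulr1 mulrN1 opprK.
Qed.

Lemma bary_lin_grad_offdiag j k :
  (k <= n)%N -> j != k -> bary_lin j (bary_grad k) <= 0.
Proof.
move=> kn jk; rewrite /bary_lin !kuhn_coord_bary_grad // (negbTE jk) eqSS (negbTE jk).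
by rewrite sub0r subr0 mulrN -opprD oppr_le0 addr_ge0 // mulr_ge0.
Qed.

Lemma bary_grad_sqnorm_gt0 k : 0 < bary_grad_sqnorm k.
Proof. exact: lt_le_trans ltr01 (bary_grad_sqnorm_ge1 k). Qed.

Lemma kuhn_baryB x y k : kuhn_bary k x - kuhn_bary k y = bary_lin k (x - y).
Proof. by rewrite /kuhn_bary opprD addrACA subrr add0r linearB. Qed.

Lemma kuhn_bary_shift x (t : R) j k :
  kuhn_bary j (x - t *: bary_grad k) = kuhn_bary j x - t * bary_lin j (bary_grad k).
Proof. by rewrite /kuhn_bary linearB linearZ /= addrA. Qed.

Lemma kuhn_facet_shift x (k : 'I_n.+1) : T x ->
  facet v k (x - (kuhn_bary k x / bary_grad_sqnorm k) *: bary_grad k).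
Proof.
move=> /kuhn_simplexP bary0; have A0 := bary_grad_sqnorm_gt0 k.
set t := _ / _; have t0 : 0 <= t by rewrite divr_ge0 // ltW.
have barykt : kuhn_bary k x - t * bary_lin k (bary_grad k) = 0.
  by rewrite bary_lin_grad_diag divfK ?subrr // gt_eqF.
apply/kuhn_facetP; split; last by rewrite kuhn_bary_shift.
apply/kuhn_simplexP => j; rewrite kuhn_bary_shift.
have [-> | jk] := eqVneq j k; first by rewrite barykt.
have := bary_lin_grad_offdiag (leq_ord k) (jk : (j : nat) != k).
by have := bary0 j; nra.
Qed.

Lemma sqr_kuhn_bary_le x y (k : 'I_n.+1) : facet v k y ->
  kuhn_bary k x ^+ 2 <= bary_grad_sqnorm k * sqnorm (x - y).
Proof.
case/kuhn_facetP => _ baryk.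
by rewrite -[kuhn_bary k x]subr0 -baryk kuhn_baryB sqr_bary_lin_le.
Qed.

Lemma dist_kuhn_facet x (k : 'I_n.+1) : T x ->
  dist_set x (facet v k) = Num.sqrt (kuhn_bary k x ^+ 2 / bary_grad_sqnorm k).
Proof.
move=> Tx; have A0 := bary_grad_sqnorm_gt0 k.
have Fy := kuhn_facet_shift k Tx; set y := x - _ in Fy.
apply/le_anti/andP; split.
  apply: le_trans (dist_set_le x Fy) _; rewrite edistE ler_wsqrtr //.
  rewrite /y opprB addrC subrK sqnormZ.
  apply: le_trans (ler_wpM2l (sqr_ge0 _) (sqnorm_bary_grad k)) _.
  suff -> : (kuhn_bary k x / bary_grad_sqnorm k) ^+ 2 * bary_grad_sqnorm k
            = kuhn_bary k x ^+ 2 / bary_grad_sqnorm k by [].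
  by field; rewrite gt_eqF.
apply: lb_le_inf; first by exists (edist x y); exists y.
move=> _ [z Fz ->]; rewrite edistE ler_wsqrtr // ler_pdivrMr // mulrC.
exact: sqr_kuhn_bary_le.
Qed.

Lemma kuhn_facet_height (k : 'I_n.+1) :
  sup [set d | exists2 x, T x & d = dist_set x (facet v k)]
  = Num.sqrt (bary_grad_sqnorm k)^-1.
Proof.
apply: sup_max.
  exists (v k); first exact: kuhn_vertex_in.
  rewrite dist_kuhn_facet; last exact: kuhn_vertex_in.
  by rewrite kuhn_bary_vertex eqxx expr1n div1r.
move=> _ [x Tx ->]; rewrite dist_kuhn_facet // ler_wsqrtr // -[leRHS]mul1r.
apply: ler_wpM2r; first by rewrite invr_ge0 ltW ?bary_grad_sqnorm_gt0.
by rewrite expr_le1 ?kuhn_bary_le1 ?(kuhn_simplexP x).1.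
Qed.

Lemma kuhn_min_height : (0 < m)%N -> min_height v = Num.sqrt 2^-1.
Proof.
move=> m0; apply: inf_min.
  exists (inord 1 : 'I_n.+1); rewrite kuhn_facet_height /bary_grad_sqnorm inordK //=.
  by rewrite ltnS m0.
move=> _ [k ->]; rewrite kuhn_facet_height ler_wsqrtr //.
by rewrite lef_pV2 ?posrE ?bary_grad_sqnorm_gt0 ?bary_grad_sqnorm_le2.
Qed.

Lemma cball_sub_kuhnP c (r : R) : 0 <= r ->
  cball c r `<=` T <->
  forall k : 'I_n.+1, r * Num.sqrt (bary_grad_sqnorm k) <= kuhn_bary k c.
Proof.
move=> r0; split=> [sub k | bary_ge x].
  have A0 := bary_grad_sqnorm_gt0 k; have sA := sqr_sqrtr (ltW A0).
  set s := Num.sqrt _ in sA *; have s0 : 0 < s by rewrite sqrtr_gt0.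
  have /kuhn_simplexP/(_ k) : T (c - (r / s) *: bary_grad k).
    apply: sub; rewrite /cball /= edist_le // addrAC subrr add0r -scaleNr sqnormZ sqrrN.
    apply: le_trans (ler_wpM2l (sqr_ge0 _) (sqnorm_bary_grad k)) _.
    by rewrite -sA expr_div_n divfK // expf_neq0 // gt_eqF.
  by rewrite kuhn_bary_shift bary_lin_grad_diag -sA subr_ge0 expr2 mulrA divfK // gt_eqF.
rewrite /cball /= edist_le // => dist_xc; apply/kuhn_simplexP => k.
have sA := sqr_sqrtr (ltW (bary_grad_sqnorm_gt0 k)).
set s := Num.sqrt _ in sA bary_ge *; have s0 : 0 <= s by rewrite sqrtr_ge0.
rewrite -[kuhn_bary k x](subrK (kuhn_bary k c)) kuhn_baryB.
have : bary_lin k (x - c) ^+ 2 <= (r * s) ^+ 2.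
  apply: le_trans (sqr_bary_lin_le k (x - c)) _.
  by rewrite exprMn sA mulrC ler_wpM2r // ltW // bary_grad_sqnorm_gt0.
move: (bary_lin _ _) (bary_ge k) (mulr_ge0 r0 s0) => w; move: (r * s) => t.
by nra.
Qed.

Definition sum_bary_grad_norm : R := \sum_(k < n.+1) Num.sqrt (bary_grad_sqnorm k).

Lemma sum_bary_grad_norm_gt0 : 0 < sum_bary_grad_norm.
Proof.
rewrite /sum_bary_grad_norm (bigD1 ord0) //=; apply: ltr_wpDr.
  by apply: sumr_ge0 => k _; exact: sqrtr_ge0.
by rewrite sqrtr_gt0 bary_grad_sqnorm_gt0.
Qed.

Lemma kuhn_in_diam : in_diam T = 2 / sum_bary_grad_norm.
Proof.
have S0 := sum_bary_grad_norm_gt0.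
have r0 : 0 <= sum_bary_grad_norm^-1 by rewrite invr_ge0 ltW.
apply: sup_max.
  exists (\sum_(k < n.+1) (Num.sqrt (bary_grad_sqnorm k) / sum_bary_grad_norm) *: v k).
  exists sum_bary_grad_norm^-1.
  split=> //; split=> //; apply/cball_sub_kuhnP => // k.
  rewrite kuhn_bary_lincomb; first by rewrite mulrC.
  by rewrite -mulr_suml divff // gt_eqF.
move=> _ [c [r [r0' [/(cball_sub_kuhnP c r0') bary_ge ->]]]].
apply: ler_wpM2l => //; rewrite -[_^-1]mul1r ler_pdivlMr // -(sum_kuhn_bary c) mulr_sumr.
by apply: ler_sum => k _; exact: bary_ge.
Qed.

Lemma sum_bary_grad_normE : sum_bary_grad_norm = 2 + m%:R * Num.sqrt 2.
Proof.
rewrite /sum_bary_grad_norm big_ord_recl big_ord_recr /=.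
rewrite (eq_bigr (fun _ => Num.sqrt 2)) => [|i _]; last first.
  by rewrite /bary_grad_sqnorm /bump /= add1n ltnS ltn_ord.
rewrite sumr_const card_ord /bary_grad_sqnorm /= ltnn add0r mulr0n addr0 sqrtr1.
by rewrite -mulr_natl; lra.
Qed.

End KuhnSimplex.

Theorem lemmaA5 (R : realType) (n : nat) (hn : (2 <= n)%N) (pi : 'S_n) :
  let T := simplex (@kuhn_vertices R n pi) in
  [/\ diam T = Num.sqrt (n%:R : R) /\ circum_diam T = Num.sqrt (n%:R : R),
      min_height (@kuhn_vertices R n pi) = 1 / Num.sqrt 2,
      1 / in_diam T = 1 + (n%:R - 1) / Num.sqrt 2,
      gamma_simplex (@kuhn_vertices R n pi)
        = Num.sqrt (n%:R : R) * (1 + (n%:R - 1) / Num.sqrt 2) &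
      2 * gamma_simplex (@kuhn_vertices R n pi) * diam T
        / min_height (@kuhn_vertices R n pi)
        = 2 * n%:R * (n%:R + Num.sqrt 2 - 1)].
Proof.
case: n hn pi => [|[|m]] // _ pi T.
have s2_gt0 : (0 : R) < Num.sqrt 2 by rewrite sqrtr_gt0.
have inv_s2 : (Num.sqrt 2)^-1 = Num.sqrt 2 / 2 :> R.
  by rewrite -[X in _ = _ / X](@sqr_sqrtr _ 2) //; field; rewrite gt_eqF.
have pred_n : m.+2%:R - 1 = m.+1%:R :> R by rewrite mulrSr addrK.
have min_h : min_height (kuhn_vertices R pi) = 1 / Num.sqrt 2.
  by rewrite kuhn_min_height // sqrtrV // div1r.
have inv_in : 1 / in_diam T = 1 + (m.+2%:R - 1) / Num.sqrt 2.
  rewrite /T kuhn_in_diam sum_bary_grad_normE pred_n inv_s2.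
  by field; rewrite gt_eqF //; have := ler0n R m; nra.
have gamma : gamma_simplex (kuhn_vertices R pi)
           = Num.sqrt m.+2%:R * (1 + (m.+2%:R - 1) / Num.sqrt 2).
  by rewrite /gamma_simplex kuhn_circum_diam -inv_in div1r.
split=> //; first by rewrite kuhn_diam kuhn_circum_diam.
rewrite gamma /T kuhn_diam min_h pred_n.
have -> : 2 * (Num.sqrt m.+2%:R * (1 + m.+1%:R / Num.sqrt 2)) * Num.sqrt m.+2%:R
            / (1 / Num.sqrt 2)
          = 2 * Num.sqrt m.+2%:R ^+ 2 * (Num.sqrt 2 + m.+1%:R) :> R.
  by field; rewrite gt_eqF.
by rewrite sqr_sqrtr // mulrSr; ring.
Qed.
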